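(* Let $a\geq 3$ and $m\geq 2a^2-a+2$ be integers, and suppose $[C(m,a)]$ is colored with red and blue so that there is no monochromatic solution of $L(m,a)$ in $[C(m,a)]$, with $a-2$ red and $a-1$ blue. Then $a$ is red and $m-1$ is blue.
   Context: For integers $m\geq 3$, $a\geq 1$, $L(m,a)$ denotes the equation $x_1+x_2+\cdots+x_{m-1}=a x_m$. For a positive integer $n$, $[n]=\{1,\dots,n\}$. A solution of $L(m,a)$ in $[n]$ is an $m$-tuple $(x_1,\dots,x_m)\in[n]^m$ (entries not necessarily distinct) satisfying the equation; given a 2-coloring of $[n]$, it is monochromatic if all $x_i$ have the same color. $C(m,a)$ denotes $\left\lceil \frac{m-1}{a}\left\lceil \frac{m-1}{a}\right\rceil\right\rceil$. *)

From mathcomp Require Import all_boot.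
Unset Printing Implicit Defensive.

Definition ceil_div (p q : nat) : nat := (p + q - 1) %/ q.

(* C(m,a) = ceil( (m-1)/a * ceil((m-1)/a) ) = ceil( (m-1) * ceil((m-1)/a) / a ) *)
Definition Cma (m a : nat) : nat := ceil_div ((m - 1) * ceil_div (m - 1) a) a.

(* an m-tuple (x_0,...,x_{m-1}) in [n]^m solving
   x_0 + ... + x_{m-2} = a * x_{m-1} *)
Definition is_solution (m a n : nat) (x : 'I_m -> nat) : Prop :=
  (forall i, 1 <= x i <= n) /\
  \sum_(i < m | i.+1 < m) x i = a * \sum_(i < m | i.+1 == m) x i.

(* a 2-colouring of [n] given by col : nat -> bool (true = red, false = blue);
   only its values on [n] matter *)
Definition monochromatic (m : nat) (col : nat -> bool) (x : 'I_m -> nat) : Prop :=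
  exists c : bool, forall i, col (x i) = c.

Definition no_mono_solution (m a n : nat) (col : nat -> bool) : Prop :=
  forall x : 'I_m -> nat, is_solution m a n x -> ~ monochromatic m col x.

From mathcomp Require Import all_boot zify.

(* Put n := m - 1, so that n <= C(m,a) once a^2 <= n.  A solution
   of L(m,a) is described by the sequence s of its first m - 1 entries together
   with its last entry X: it is a solution when sumn s = a * X.  Three such
   sequences, each made of at most three constant blocks, suffice:
   - n-2 copies of a-2, 2 copies of n-2, right side n-2      (red if a is blue
     and n-2 is red);
   - n-2a copies of a, 2a copies of a-1, right side n-2      (blue if a and
     n-2 are blue);
   so a cannot be blue; and finally
   - a-2 copies of a, n-a copies of a-2, 2 copies of n, right side n
     (red if a and n = m-1 are red), so m-1 is blue. *)

Definition tuple_of (s : seq nat) (X : nat) (i : 'I_(size s).+1) : nat :=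
  nth X s i.

Lemma sum_init_tuple_of (s : seq nat) (X : nat) :
  \sum_(i < (size s).+1 | i.+1 < (size s).+1) tuple_of s X i = sumn s.
Proof.
rewrite big_mkcond big_ord_recr /= ltnn addn0 sumnE (big_nth X) big_mkord.
by apply: eq_bigr => i _; rewrite ltnS ltn_ord.
Qed.

Lemma sum_last_tuple_of (s : seq nat) (X : nat) :
  \sum_(i < (size s).+1 | i.+1 == (size s).+1) tuple_of s X i = X.
Proof.
rewrite (big_pred1 ord_max) => [|i]; last by rewrite /= eqSS.
by rewrite /tuple_of nth_default.
Qed.

Lemma no_mono_seq (a N : nat) (col : nat -> bool) (c : bool) (s : seq nat) (X : nat) :
  no_mono_solution (size s).+1 a N col ->
  all (fun v => 0 < v <= N) s -> 0 < X <= N -> sumn s = a * X ->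
  all (fun v => col v == c) s -> col X = c -> False.
Proof.
move=> Hno /allP s_range X_range sum_s /allP s_col X_col.
apply: (Hno (tuple_of s X)).
  split; last by rewrite sum_init_tuple_of sum_last_tuple_of.
  move=> i; rewrite /tuple_of; case: (ltnP i (size s)) => [lt_i | le_i].
    exact/s_range/mem_nth.
  by rewrite nth_default.
exists c => i; rewrite /tuple_of; case: (ltnP i (size s)) => [lt_i | le_i].
  exact/eqP/s_col/mem_nth.
by rewrite nth_default.
Qed.

Lemma no_mono_three_blocks (n a N : nat) (col : nat -> bool) (c : bool)
    (k1 k2 k3 v1 v2 v3 X : nat) :
  no_mono_solution n.+1 a N col ->
  k1 + k2 + k3 = n -> k1 * v1 + k2 * v2 + k3 * v3 = a * X ->
  (forall v, v \in [:: v1; v2; v3; X] -> 0 < v <= N /\ col v = c) -> False.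
Proof.
move=> Hno size_s sum_s Hv.
pose s := nseq k1 v1 ++ nseq k2 v2 ++ nseq k3 v3.
have in_s v : v \in s -> v \in [:: v1; v2; v3; X].
  by rewrite !mem_cat !mem_nseq !inE => /or3P[] /andP[_ ->]; rewrite ?orbT.
apply: (@no_mono_seq a N col c s X).
- by rewrite !size_cat !size_nseq addnA size_s.
- by apply/allP => v /in_s /Hv [].
- by case: (Hv X); rewrite ?inE ?eqxx ?orbT.
- by rewrite !sumn_cat !sumn_nseq -sum_s addnA ![_ * k1]mulnC
     ![_ * k2]mulnC ![_ * k3]mulnC.
- by apply/allP => v /in_s /Hv [_ ->].
- by case: (Hv X); rewrite ?inE ?eqxx ?orbT.
Qed.

(* C(m,a) >= m - 1 as soon as a^2 <= m - 1, since then ceil((m-1)/a) >= a. *)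
Lemma Cma_ge (m a : nat) : 0 < a -> a * a <= m - 1 -> m - 1 <= Cma m a.
Proof.
move=> a_gt0 Hm; rewrite /Cma /ceil_div.
have ceil_ge_a : a <= (m - 1 + a - 1) %/ a by rewrite leq_divRL //; nia.
rewrite leq_divRL //; nia.
Qed.

Theorem lemma3 (m a : nat) (col : nat -> bool) :
  3 <= a ->
  2 * a ^ 2 - a + 2 <= m ->
  no_mono_solution m a (Cma m a) col ->
  col (a - 2) = true ->
  col (a - 1) = false ->
  col a = true /\ col (m - 1) = false.
Proof.
move=> a_ge3 m_ge Hno red_a2 blue_a1.
have {}m_ge : 2 * a * a - a + 2 <= m by move: m_ge; rewrite expnS expn1 mulnA.
have n_le_C := @Cma_ge m a ltac:(lia) ltac:(nia).
case: m m_ge Hno n_le_C => [|n] m_ge Hno; first by lia.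
rewrite subSS subn0 => n_le_C.
have n_ge : 2 * a + 2 <= n by nia.
have range v : 0 < v <= n -> 0 < v <= Cma n.+1 a by lia.
have red_a : col a = true.
  case blue_a: (col a) => //; exfalso.
  case: (boolP (col (n - 2))) => [red_n2 | /negbTE blue_n2].
  - (* (n-2)(a-2) + 2(n-2) = a(n-2), all red *)
    apply: (@no_mono_three_blocks n a _ col true
              (n - 2) 2 0 (a - 2) (n - 2) (a - 2) (n - 2) Hno); [lia | nia |].
    by move=> v; rewrite !inE => /or4P[] /eqP->; split=> //; apply: range; lia.
  - (* (n-2a)a + 2a(a-1) = a(n-2), all blue *)
    apply: (@no_mono_three_blocks n a _ col false
              (n - 2 * a) (2 * a) 0 a (a - 1) a (n - 2) Hno); [lia | nia |].
    by move=> v; rewrite !inE => /or4P[] /eqP->; split=> //; apply: range; lia.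
split=> //; case red_n: (col n) => //; exfalso.
(* (a-2)a + (n-a)(a-2) + 2n = an, all red *)
apply: (@no_mono_three_blocks n a _ col true
          (a - 2) (n - a) 2 a (a - 2) n n Hno); [lia | nia |].
by move=> v; rewrite !inE => /or4P[] /eqP->; split=> //; apply: range; lia.
Qed.
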